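(* Let $P,Q\in W^{(l)}\setminus\{0\}$. Then: (1) $w(PQ)=w(P)+w(Q)$ and $\overline w(PQ)=\overline w(P)+\overline w(Q)$; in particular $PQ\neq0$. (2) $\ell_{\rho,\sigma}(PQ)=\ell_{\rho,\sigma}(P)\ell_{\rho,\sigma}(Q)$ for all $(\rho,\sigma)\in\mathfrak V$. (3) $v_{\rho,\sigma}(PQ)=v_{\rho,\sigma}(P)+v_{\rho,\sigma}(Q)$ for all $(\rho,\sigma)\in\overline{\mathfrak V}$. (4) $\mathrm{st}_{\rho,\sigma}(PQ)=\mathrm{st}_{\rho,\sigma}(P)+\mathrm{st}_{\rho,\sigma}(Q)$ for all $(\rho,\sigma)\in\mathfrak V$. (5) $\mathrm{en}_{\rho,\sigma}(PQ)=\mathrm{en}_{\rho,\sigma}(P)+\mathrm{en}_{\rho,\sigma}(Q)$ for all $(\rho,\sigma)\in\mathfrak V$. The same properties hold for $P,Q\in L^{(l)}\setminus\{0\}$.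
   Context: $K$ is a field of characteristic zero, $l\in\mathbb{N}$. $W^{(l)}$ is the associative $K$-algebra with $K$-basis $\{X^{i/l}Y^j:i\in\mathbb{Z},j\in\mathbb{N}_0\}$, powers of $X$ multiplying as Laurent monomials and $[Y,X^\alpha]=\alpha X^{\alpha-1}$ for $\alpha\in\frac1l\mathbb{Z}$. $L^{(l)}=K[x^{1/l},x^{-1/l},y]$ (commutative), $\Psi^{(l)}(X^{i/l}Y^j)=x^{i/l}y^j$ ($K$-linear). Supports are sets of exponents with nonzero coefficients (for $W^{(l)}$, via $\Psi^{(l)}$). $\overline{\mathfrak V}=\{(\rho,\sigma)\in\mathbb{Z}^2:\gcd(\rho,\sigma)=1,\rho+\sigma\ge0\}$, $\mathfrak V$ its subset with $\rho+\sigma>0$. For $P\ne0$, $v_{\rho,\sigma}(P)=\max\{\rho a+\sigma b:(a,b)\in\mathrm{Supp}(P)\}$ and $\ell_{\rho,\sigma}(P)$ is the sum of the terms (of $\Psi^{(l)}(P)$) whose exponent attains this maximum. $w(P)$: among the points $(a,b)\in\mathrm{Supp}(P)$ maximizing $a-b$, the one with largest $a$; $\overline w(P)$: among those maximizing $b-a$, the one with largest $b$. $\mathrm{st}_{\rho,\sigma}(P):=w(\ell_{\rho,\sigma}(P))$, $\mathrm{en}_{\rho,\sigma}(P):=\overline w(\ell_{\rho,\sigma}(P))$. *)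

From HB Require Import structures.
From mathcomp Require Import all_boot all_order all_algebra.
From mathcomp Require Import finmap.
Set Implicit Arguments. Unset Strict Implicit. Unset Printing Implicit Defensive.
Import Order.TTheory GRing.Theory Num.Theory.
Local Open Scope ring_scope.


(* An element of W^(l) (resp. L^(l)) is a finite K-linear combination of basis
   monomials X^{i/l} Y^j (resp. x^{i/l} y^j); we encode the monomial with
   exponent (i/l, j) by the index pair (i, j) : int * nat, and an element by its
   finitely supported coefficient function.  Psi^(l) is then the identity on
   coefficient functions, so both algebras share this carrier and differ only
   in their multiplication. *)
Definition lpoly (K : fieldType) := {fsfun (int * nat) -> K with 0}.

Definition Supp (K : fieldType) (P : lpoly K) : {fset int * nat} := finsupp P.

Definition expo (l : nat) (p : int * nat) : rat * rat :=
  ((p.1)%:~R / (l%:R), (p.2)%:R).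

Definition ffact (K : fieldType) (a : K) (k : nat) : K :=
  \prod_(i < k) (a - i%:R).

(* Product in W^(l): normal ordering via
   (X^a Y^j)(X^b Y^m) = sum_k C(j,k) b(b-1)..(b-k+1) X^{a+b-k} Y^{j-k+m},
   which follows from [Y, X^b] = b X^{b-1}. *)
Definition mulW_key (l : nat) (p q : int * nat) (k : nat) : int * nat :=
  ((p.1 + q.1 - (k * l)%:Z)%R, (p.2 - k + q.2)%N).

Definition mulW (K : fieldType) (l : nat) (P Q : lpoly K) : lpoly K :=
  let S := [seq mulW_key l pq.1 pq.2 k
             | pq <- [seq (p, q) | p <- Supp P, q <- Supp Q],
               k <- iota 0 pq.1.2.+1] in
  [fsfun x in [fset y | y in S]%fset =>
     \sum_(p <- Supp P) \sum_(q <- Supp Q) \sum_(k < p.2.+1)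
        (if x == mulW_key l p q k then
           P p * Q q * ('C(p.2, k))%:R * ffact ((q.1)%:~R / (l%:R)) k
         else 0)].

Definition mulL_key (p q : int * nat) : int * nat :=
  ((p.1 + q.1)%R, (p.2 + q.2)%N).

Definition mulL (K : fieldType) (P Q : lpoly K) : lpoly K :=
  let S := [seq mulL_key p q | p <- Supp P, q <- Supp Q] in
  [fsfun x in [fset y | y in S]%fset =>
     \sum_(p <- Supp P) \sum_(q <- Supp Q)
        (if x == mulL_key p q then P p * Q q else 0)].

Definition padd (p q : int * nat) : int * nat := ((p.1 + q.1)%R, (p.2 + q.2)%N).

Definition wt (rho sigma : int) (l : nat) (p : int * nat) : rat :=
  rho%:~R * (expo l p).1 + sigma%:~R * (expo l p).2.

Definition vrs (K : fieldType) (rho sigma : int) (l : nat) (P : lpoly K) : rat :=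
  let s := Supp P in
  foldr (fun p m => Num.max (wt rho sigma l p) m)
        (wt rho sigma l (head (0%R, 0%N) s)) s.

Definition ell (K : fieldType) (rho sigma : int) (l : nat) (P : lpoly K) : lpoly K :=
  [fsfun x in Supp P =>
     if wt rho sigma l x == vrs rho sigma l P then P x else 0].

Definition lexlt (x y : rat * rat) : bool :=
  (x.1 < y.1) || ((x.1 == y.1) && (x.2 < y.2)).

Definition lexmax (key : int * nat -> rat * rat) (s : seq (int * nat))
    (x0 : int * nat) : int * nat :=
  foldr (fun p q => if lexlt (key q) (key p) then p else q) (head x0 s) s.

Definition w (K : fieldType) (l : nat) (P : lpoly K) : int * nat :=
  lexmax (fun p => ((expo l p).1 - (expo l p).2, (expo l p).1))
         (Supp P) (0%R, 0%N).

Definition wbar (K : fieldType) (l : nat) (P : lpoly K) : int * nat :=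
  lexmax (fun p => ((expo l p).2 - (expo l p).1, (expo l p).2))
         (Supp P) (0%R, 0%N).

Definition st (K : fieldType) (rho sigma : int) (l : nat) (P : lpoly K) :=
  w l (ell rho sigma l P).
Definition en (K : fieldType) (rho sigma : int) (l : nat) (P : lpoly K) :=
  wbar l (ell rho sigma l P).

Definition inVbar (rho sigma : int) : bool :=
  (gcdz rho sigma == 1%N) && (0 <= rho + sigma)%R.
Definition inV (rho sigma : int) : bool :=
  (gcdz rho sigma == 1%N) && (0 < rho + sigma)%R.

(* Compare monomials by a pair of linear forms of the exponent (a, b), read
   lexicographically: (a - b, a) for w, (b - a, b) for wbar, and the weight
   rho a + sigma b with a tie-break for v.  By normal ordering,
   (X^a Y^j)(X^b Y^m) is X^(a+b) Y^(j+m) plus terms whose exponents are shifted by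
   (-k, -k) with k > 0, and such a shift strictly lowers all these forms as soon as
   rho + sigma >= 0.  Hence the product of the top monomials of P and Q is the
   unique top monomial of PQ, with coefficient the product of the two leading
   coefficients; this gives w, wbar and v.  When rho + sigma > 0 the shift even
   lowers the weight, so the top-weight part of PQ only involves the k = 0 terms of
   the leading forms, i.e. it is their commutative product; st and en follow by
   applying the statement for w and wbar in L^(l) to the leading forms. *)

From HB Require Import structures.
From mathcomp Require Import all_boot all_order all_algebra.
From mathcomp Require Import finmap.
From mathcomp Require Import ring lra.
Import Order.TTheory GRing.Theory Num.Theory.
Set Implicit Arguments. Unset Strict Implicit. Unset Printing Implicit Defensive.
Local Open Scope ring_scope.

Local Notation lex := (rat *l rat).

Lemma pairD (a b c d : rat) : (a, b) + (c, d) = (a + c, b + d).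
Proof. by []. Qed.

Lemma pairB (a b c d : rat) : (a, b) - (c, d) = (a - c, b - d).
Proof. by []. Qed.

Section LexOrder.
Local Open Scope order_scope.
Implicit Types x y z : rat * rat.

Lemma lexltE x y : lexlt x y = (x < y :> lex).
Proof. by case: x y => [a b] [c d]; rewrite /lexlt ltxi_pair /=; case: ltgtP. Qed.

Lemma lex_leD2l x y z : (x + y <= x + z :> lex) = (y <= z :> lex).
Proof. by case: x y z => [a b] [c d] [e f]; rewrite !lexi_pair /= !lerD2l. Qed.

Lemma lex_ltD2l x y z : (x + y < x + z :> lex) = (y < z :> lex).
Proof. by case: x y z => [a b] [c d] [e f]; rewrite !ltxi_pair /= !lerD2l ltrD2l. Qed.

Lemma lex_leD x x' y y' : x <= x' :> lex -> y <= y' :> lex -> x + y <= x' + y' :> lex.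
Proof.
move=> le_x le_y; apply: (@le_trans _ lex (x' + y)); last by rewrite lex_leD2l.
by rewrite [x + y]addrC [x' + y]addrC lex_leD2l.
Qed.

Lemma lex_ltD x x' y y' : x < x' :> lex -> y <= y' :> lex -> x + y < x' + y' :> lex.
Proof.
move=> lt_x le_y; apply: (@lt_le_trans _ lex (x' + y)); last by rewrite lex_leD2l.
by rewrite [x + y]addrC [x' + y]addrC lex_ltD2l.
Qed.

Lemma lex_leD_eq x x' y y' : x <= x' :> lex -> y <= y' :> lex ->
  x + y = x' + y' -> x = x' /\ y = y'.
Proof.
move=> le_x le_y eq_xy; have ex : x = x'.
  apply/eqP; apply: contraT => ne_x.
  have lt_x : x < x' :> lex by rewrite lt_neqAle ne_x le_x.
  by have := lex_ltD lt_x le_y; rewrite eq_xy ltxx.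
by split=> //; apply: (addrI x); rewrite {2}ex.
Qed.

Lemma lex_ltBl x d : (x - d < x :> lex) = (0 < d :> lex).
Proof. by rewrite -{2}[x]addr0 lex_ltD2l -(lex_ltD2l d) subrr addr0. Qed.

End LexOrder.

Section LexMax.
Variable key : int * nat -> rat * rat.
Implicit Type s : seq (int * nat).
Local Notation step := (fun p q => if lexlt (key q) (key p) then p else q).

Lemma foldr_lexmaxP z s : foldr step z s \in z :: s /\
  forall y, y \in z :: s -> (key y <= key (foldr step z s) :> lex)%O.
Proof.
elim: s => [|a s [r_in r_max]] /=.
  by split=> [|y]; rewrite ?mem_head // inE => /eqP->.
set r := foldr step z s in r_in r_max *; rewrite lexltE.
case: ltP => [lt_ra|le_ar]; split.
- by rewrite !inE eqxx orbT.
- move=> y; rewrite !inE => /or3P[/eqP->|/eqP->//|ys].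
    exact: le_trans (r_max _ (mem_head _ _)) (ltW lt_ra).
  by apply: le_trans (ltW lt_ra); apply: r_max; rewrite inE ys orbT.
- by move: r_in; rewrite !inE => /orP[->|->]; rewrite ?orbT.
- move=> y; rewrite !inE => /or3P[/eqP->|/eqP->//|ys].
    exact: r_max (mem_head _ _).
  by apply: r_max; rewrite inE ys orbT.
Qed.

Lemma lexmaxP s x0 : s != [::] -> lexmax key s x0 \in s /\
  forall y, y \in s -> (key y <= key (lexmax key s x0) :> lex)%O.
Proof.
case: s => [//|a s] _; rewrite /lexmax [head _ _]/=.
have [r_in r_max] := foldr_lexmaxP a (a :: s).
split; first by move: r_in; rewrite inE => /orP[/eqP->|]; rewrite ?mem_head.
by move=> y ys; apply: r_max; rewrite inE ys orbT.
Qed.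

Lemma lexmax_eq s x0 m : injective key -> m \in s ->
  (forall y, y \in s -> (key y <= key m :> lex)%O) -> lexmax key s x0 = m.
Proof.
move=> key_inj ms m_max; have s_neq0 : s != [::] by case: (s) ms.
have [r_in r_max] := lexmaxP x0 s_neq0.
by apply: key_inj; apply: (@le_anti _ lex); rewrite r_max // m_max.
Qed.

End LexMax.

Lemma eq_lexmax key key' s x0 : key =1 key' -> lexmax key s x0 = lexmax key' s x0.
Proof.
move=> eq_key; rewrite /lexmax; move: (head x0 s) => z.
by elim: s => //= a s ->; rewrite !eq_key.
Qed.

Lemma fset_enum_neq0 (T : choiceType) (A : {fset T}) :
  A != fset0 -> (A : seq T) != [::].
Proof.
by case/fset0Pn => x; rewrite -[x \in A]/(x \in (A : seq T)); case: (A : seq T).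
Qed.

Lemma foldr_max_le (g : int * nat -> rat) z s :
  let r := foldr (fun p m => Num.max (g p) m) z s in
  [/\ z <= r, forall y, y \in s -> g y <= r & r = z \/ exists2 y, y \in s & g y = r].
Proof.
elim: s => [|a s [z_le r_max r_at]] /=; first by split=> //; left.
set r := foldr _ _ _ in z_le r_max r_at *; split.
- by rewrite le_max z_le orbT.
- by move=> y; rewrite inE le_max => /orP[/eqP->|/r_max->]; rewrite ?lexx ?orbT.
case: (leP (g a) r) => [_|lt_ra]; last by right; exists a; rewrite ?mem_head.
by case: r_at => [->|[y ys <-]]; [left|right; exists y; rewrite // inE ys orbT].
Qed.

Lemma vrsP (K : fieldType) rho sigma l (P : lpoly K) : Supp P != fset0 ->
  (forall y, y \in Supp P -> wt rho sigma l y <= vrs rho sigma l P) /\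
  exists2 z, z \in Supp P & wt rho sigma l z = vrs rho sigma l P.
Proof.
move=> /fset_enum_neq0 P_neq0; rewrite /vrs; set z0 := head _ _.
have z0_in : z0 \in Supp P.
  rewrite -[_ \in Supp P]/(_ \in (Supp P : seq _)) /z0.
  by case: (Supp P : seq _) P_neq0 => // a s _; rewrite mem_head.
have [_ r_max r_at] := foldr_max_le (wt rho sigma l) (wt rho sigma l z0) (Supp P).
by split=> //; case: r_at => [->|//]; exists z0.
Qed.

Section ProductCoefficients.
Variables (K : fieldType) (l : nat).
Implicit Types (P Q : lpoly K) (c : int * nat -> int * nat -> nat -> K).

Lemma mem_Supp P x : (x \in Supp P) = (P x != 0).
Proof. by rewrite mem_finsupp. Qed.

Lemma Supp_coef0 P x : x \notin Supp P -> P x = 0.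
Proof. by rewrite mem_Supp negbK => /eqP. Qed.

Definition mul_coef c P Q x : K :=
  \sum_(p <- Supp P) \sum_(q <- Supp Q) \sum_(k < p.2.+1)
     (if x == mulW_key l p q k then P p * Q q * c p q k else 0).

Definition coefW (p q : int * nat) (k : nat) : K :=
  ('C(p.2, k))%:R * ffact ((q.1)%:~R / l%:R) k.

(* The commutative product keeps only the k = 0 terms of the same sum. *)
Definition coefL (p q : int * nat) (k : nat) : K := (k == 0)%:R.

Lemma mulW_key0 p q : mulW_key l p q 0 = padd p q.
Proof. by rewrite /mulW_key mul0n subr0 subn0. Qed.

Lemma mulW_coefE P Q x : mulW l P Q x = mul_coef coefW P Q x.
Proof.
rewrite /mulW fsfun_fun /mul_coef; case: ifP => [_|x_out].
  by do 3!apply: eq_bigr => ? _; rewrite /coefW !mulrA.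
symmetry; rewrite big_seq big1 // => p pP; rewrite big_seq big1 // => q qQ.
rewrite big1 // => k _; case: eqP => // x_key; case/negP: (negbT x_out).
rewrite x_key inE; apply/flatten_mapP; exists (p, q); first exact: allpairs_f.
by apply: map_f; rewrite mem_iota add0n ltn_ord.
Qed.

Lemma mulL_coefE P Q x : mulL P Q x = mul_coef coefL P Q x.
Proof.
have -> : mul_coef coefL P Q x = \sum_(p <- Supp P) \sum_(q <- Supp Q)
    (if x == mulL_key p q then P p * Q q else 0).
  apply: eq_bigr => p _; apply: eq_bigr => q _.
  rewrite big_ord_recl big1 => [|k _]; last by rewrite /coefL mulr0; case: ifP.
  by rewrite addr0 mulW_key0 /coefL mulr1.
rewrite /mulL fsfun_fun; case: ifP => // x_out.
symmetry; rewrite big_seq big1 // => p pP; rewrite big_seq big1 // => q qQ.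
case: eqP => // x_key; case/negP: (negbT x_out).
by rewrite x_key inE; apply: allpairs_f.
Qed.

Lemma mul_coef_fsubset c P Q (A B : {fset int * nat}) x :
  (Supp P `<=` A)%fset -> (Supp Q `<=` B)%fset ->
  mul_coef c P Q x = \sum_(p <- A) \sum_(q <- B) \sum_(k < p.2.+1)
     (if x == mulW_key l p q k then P p * Q q * c p q k else 0).
Proof.
move=> sPA sQB; rewrite /mul_coef (big_fset_incl _ sPA) => [|p _ pP]; last first.
  rewrite big1 // => q _; rewrite big1 // => k _.
  by rewrite (Supp_coef0 pP) !mul0r; case: ifP.
apply: eq_bigr => p _; apply: (big_fset_incl _ sQB) => q _ qQ.
by rewrite big1 // => k _; rewrite (Supp_coef0 qQ) mulr0 mul0r; case: ifP.
Qed.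

Lemma sum_triple_single (F : int * nat -> int * nat -> nat -> K)
    (sP sQ : seq (int * nat)) p0 q0 :
  uniq sP -> uniq sQ -> p0 \in sP -> q0 \in sQ ->
  (forall p q (k : nat), p \in sP -> q \in sQ -> (k < p.2.+1)%N ->
      (p != p0) || (q != q0) || (k != 0)%N -> F p q k = 0) ->
  \sum_(p <- sP) \sum_(q <- sQ) \sum_(k < p.2.+1) F p q k = F p0 q0 0%N.
Proof.
move=> uP uQ p0P q0Q F0.
rewrite (bigD1_seq p0) //= [X in _ + X]big1_seq ?addr0 => [|p /andP[ne_p pP]].
  rewrite (bigD1_seq q0) //= [X in _ + X]big1_seq ?addr0 => [|q /andP[ne_q qQ]].
    by rewrite big_ord_recl big1 ?addr0 // => k _; rewrite F0 ?ltn_ord // !eqxx.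
  by rewrite big1 // => k _; rewrite F0 // ne_q orbT.
by rewrite big_seq big1 // => q qQ; rewrite big1 // => k _; rewrite F0 // ne_p.
Qed.

End ProductCoefficients.

Section LeadingTerm.
Variables (K : fieldType) (l : nat) (kap : int * nat -> rat * rat).
Hypothesis kap_inj : injective kap.
Hypothesis kap_padd : forall p q, kap (padd p q) = kap p + kap q.
Hypothesis kap_key_lt : forall p q (k : nat), (0 < k)%N -> (k <= p.2)%N ->
  (kap (mulW_key l p q k) < kap p + kap q :> lex)%O.
Variable c : int * nat -> int * nat -> nat -> K.
Hypothesis c_key0 : forall p q, c p q 0 = 1.
Variables P Q : lpoly K.
Hypotheses (P_neq0 : Supp P != fset0) (Q_neq0 : Supp Q != fset0).
Local Notation top R := (lexmax kap (Supp R) (0, 0%N)).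

Lemma kap_key_le p q (k : nat) : (k <= p.2)%N ->
  (kap (mulW_key l p q k) <= kap p + kap q :> lex)%O.
Proof.
case: k => [|k] le_kp; first by rewrite mulW_key0 kap_padd.
exact/ltW/kap_key_lt.
Qed.

Lemma mul_coef_top : mul_coef l c P Q (padd (top P) (top Q)) = P (top P) * Q (top Q).
Proof.
have [tP_in tP_max] := lexmaxP kap (0, 0%N) (fset_enum_neq0 P_neq0).
have [tQ_in tQ_max] := lexmaxP kap (0, 0%N) (fset_enum_neq0 Q_neq0).
rewrite /mul_coef (@sum_triple_single _ (fun p q k =>
    if padd (top P) (top Q) == mulW_key l p q k then P p * Q q * c p q k else 0)
  _ _ _ _ (fset_uniq _) (fset_uniq _) tP_in tQ_in) => [|p q k pP qQ lt_kp ne].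
  by rewrite mulW_key0 eqxx c_key0 mulr1.
case: eqP => // /(congr1 kap); rewrite kap_padd.
case: k lt_kp ne => [|k] lt_kp ne.
  rewrite mulW_key0 kap_padd => /esym/(lex_leD_eq (tP_max _ pP) (tQ_max _ qQ))[].
  by move=> /kap_inj eq_p /kap_inj eq_q; rewrite eq_p eq_q !eqxx in ne.
have le_top := lex_leD (tP_max _ pP) (tQ_max _ qQ).
move=> eq_top; have := lt_le_trans (kap_key_lt q (ltn0Sn k) lt_kp) le_top.
by rewrite eq_top ltxx.
Qed.

Lemma mul_coef_le_top x : mul_coef l c P Q x != 0 ->
  (kap x <= kap (top P) + kap (top Q) :> lex)%O.
Proof.
have [_ tP_max] := lexmaxP kap (0, 0%N) (fset_enum_neq0 P_neq0).
have [_ tQ_max] := lexmaxP kap (0, 0%N) (fset_enum_neq0 Q_neq0).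
apply: contraNT => x_gt; apply/eqP.
rewrite /mul_coef big_seq big1 // => p pP; rewrite big_seq big1 // => q qQ.
rewrite big1 // => k _; case: eqP => // x_key; case/negP: x_gt.
rewrite x_key; apply: le_trans (kap_key_le q (ltn_ord k)) _.
by apply: lex_leD; [apply: tP_max | apply: tQ_max].
Qed.

Lemma lexmax_mul (M : lpoly K) : (forall x, M x = mul_coef l c P Q x) ->
  padd (top P) (top Q) \in Supp M /\ top M = padd (top P) (top Q).
Proof.
move=> ME; have top_in : padd (top P) (top Q) \in Supp M.
  have [tP_in _] := lexmaxP kap (0, 0%N) (fset_enum_neq0 P_neq0).
  have [tQ_in _] := lexmaxP kap (0, 0%N) (fset_enum_neq0 Q_neq0).
  by rewrite mem_Supp ME mul_coef_top mulf_neq0 // -mem_Supp.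
split=> //; apply: lexmax_eq => // y; rewrite mem_Supp ME kap_padd.
exact: mul_coef_le_top.
Qed.

End LeadingTerm.

Section Exponents.
Variable l : nat.
Hypothesis l_gt0 : (0 < l)%N.

Lemma expo_inj : injective (expo l).
Proof.
have l_neq0 : (l%:R : rat) != 0 by rewrite pnatr_eq0 -lt0n.
move=> [a b] [a' b'] [/(congr1 ( *%R^~ l%:R)) + /eqP]; rewrite !divfK //.
by move=> /eqP; rewrite eqr_int eqr_nat => /eqP-> /eqP->.
Qed.

Lemma expo_key p q (k : nat) : (k <= p.2)%N ->
  expo l (mulW_key l p q k) =
  ((expo l p).1 + (expo l q).1 - k%:R, (expo l p).2 + (expo l q).2 - k%:R).
Proof.
have l_neq0 : (l%:R : rat) != 0 by rewrite pnatr_eq0 -lt0n.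
move=> le_kp; rewrite /expo /mulW_key /=; congr pair.
  by rewrite rmorphB rmorphD /= -[(k * l)%N%:~R]/((k * l)%N%:R) natrM; field.
by rewrite natrD natrB //; ring.
Qed.

Lemma wt_key rho sigma p q (k : nat) : (k <= p.2)%N ->
  wt rho sigma l (mulW_key l p q k) =
  wt rho sigma l p + wt rho sigma l q - k%:R * (rho + sigma)%:~R.
Proof. by move=> le_kp; rewrite /wt expo_key //= rmorphD /=; ring. Qed.

End Exponents.

Definition lexform (u v e : rat * rat) : rat * rat :=
  (u.1 * e.1 + u.2 * e.2, v.1 * e.1 + v.2 * e.2).

Lemma lexform_inj u v : u.1 * v.2 != u.2 * v.1 -> injective (lexform u v).
Proof.
move=> det_neq0 [a b] [a' b'] [e1 e2].
have : (u.1 * v.2 - u.2 * v.1) * (a - a') = 0 /\ (u.1 * v.2 - u.2 * v.1) * (b - b') = 0.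
  split.
    have -> : (u.1 * v.2 - u.2 * v.1) * (a - a') =
      v.2 * (u.1 * a + u.2 * b - (u.1 * a' + u.2 * b'))
      - u.2 * (v.1 * a + v.2 * b - (v.1 * a' + v.2 * b')) by ring.
    by rewrite e1 e2 !subrr !mulr0 subr0.
  have -> : (u.1 * v.2 - u.2 * v.1) * (b - b') =
    u.1 * (v.1 * a + v.2 * b - (v.1 * a' + v.2 * b'))
    - v.1 * (u.1 * a + u.2 * b - (u.1 * a' + u.2 * b')) by ring.
  by rewrite e1 e2 !subrr !mulr0 subr0.
by case=> /eqP + /eqP; rewrite !mulf_eq0 !subr_eq0 (negbTE det_neq0) => /eqP-> /eqP->.
Qed.

Section LexformKey.
Variables (l : nat) (u v : rat * rat).
Hypothesis l_gt0 : (0 < l)%N.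
Hypothesis det_neq0 : u.1 * v.2 != u.2 * v.1.
Hypothesis form_gt0 : (0 < (u.1 + u.2, v.1 + v.2) :> lex)%O.
Local Notation kap := (lexform u v \o expo l).

Lemma lexform_expo_inj : injective kap.
Proof. by move=> p q /(lexform_inj det_neq0)/(expo_inj l_gt0). Qed.

Lemma lexform_expo_padd p q :
  lexform u v (expo l (padd p q)) = lexform u v (expo l p) + lexform u v (expo l q).
Proof.
rewrite /expo /= intrD natrD mulrDl.
by case: (p) (q) => [a b] [a' b']; rewrite /lexform /= pairD; congr pair; ring.
Qed.

Lemma lexform_expo_key_lt p q (k : nat) : (0 < k)%N -> (k <= p.2)%N ->
  (kap (mulW_key l p q k) < kap p + kap q :> lex)%O.
Proof.
move=> k_gt0 le_kp; rewrite /= expo_key //.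
case: (expo l p) (expo l q) => [a b] [a' b'] /=.
have -> : lexform u v (a + a' - k%:R, b + b' - k%:R) =
    lexform u v (a, b) + lexform u v (a', b')
    - (k%:R * (u.1 + u.2), k%:R * (v.1 + v.2)).
  by rewrite /lexform /= pairD pairB; congr pair; ring.
have k_gt0' : (0 : rat) < k%:R by rewrite ltr0n.
rewrite lex_ltBl; move: form_gt0; rewrite !ltxi_pair /=.
by rewrite pmulr_rge0 // pmulr_rle0 // pmulr_rgt0.
Qed.

End LexformKey.

Section LeadingForm.
Variables (K : fieldType) (l : nat) (rho sigma : int).
Hypothesis l_gt0 : (0 < l)%N.
Hypothesis rs_gt0 : 0 < rho + sigma.
Variable c : int * nat -> int * nat -> nat -> K.
Hypothesis c_key0 : forall p q, c p q 0 = 1.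
Variables P Q : lpoly K.
Hypotheses (P_neq0 : Supp P != fset0) (Q_neq0 : Supp Q != fset0).
Local Notation wt := (wt rho sigma l).
Local Notation vrs := (vrs rho sigma l).
Local Notation ell := (ell rho sigma l).

Lemma ellE (R : lpoly K) x : ell R x = if wt x == vrs R then R x else 0.
Proof. by rewrite /ell fsfun_fun; case: ifP => // /negbT/Supp_coef0->; case: ifP. Qed.

Lemma ell_Supp_sub (R : lpoly K) : (Supp (ell R) `<=` Supp R)%fset.
Proof. by apply/fsubsetP => x; rewrite !mem_Supp ellE; case: ifP; rewrite ?eqxx. Qed.

Lemma wt_key_eq_vrs p q (k : nat) : p \in Supp P -> q \in Supp Q -> (k <= p.2)%N ->
  (wt (mulW_key l p q k) == vrs P + vrs Q) =
  [&& k == 0%N, wt p == vrs P & wt q == vrs Q].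
Proof.
move=> pP qQ le_kp; have [wt_leP _] := vrsP rho sigma l P_neq0.
have [wt_leQ _] := vrsP rho sigma l Q_neq0.
have := wt_leP p pP; have := wt_leQ q qQ; rewrite wt_key //.
case: k le_kp => [|k] _ le_q le_p /=.
  rewrite mul0r subr0; apply/eqP/andP => [e|[/eqP-> /eqP->]] //.
  by split; apply/eqP; lra.
have : (0 : rat) < k.+1%:R * (rho + sigma)%:~R by rewrite mulr_gt0 ?ltr0n ?ltr0z.
by move=> shift_gt0; apply/eqP => e; lra.
Qed.

Lemma ell_mul_coef_term x p q (k : nat) :
  p \in Supp P -> q \in Supp Q -> (k < p.2.+1)%N ->
  (if x == mulW_key l p q k then ell P p * ell Q q * coefL K p q k else 0)
  = if wt x == vrs P + vrs Q
    then (if x == mulW_key l p q k then P p * Q q * c p q k else 0) else 0.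
Proof.
move=> pP qQ lt_kp; case: eqP => [->|_]; last by case: ifP.
rewrite wt_key_eq_vrs // !ellE.
case: k lt_kp => [|k] _; last by rewrite /coefL mulr0.
rewrite c_key0 /coefL /= !mulr1.
by case: (wt p == _); case: (wt q == _); rewrite ?mul0r ?mulr0.
Qed.

Lemma ell_mul_coef (M : lpoly K) : (forall x, M x = mul_coef l c P Q x) ->
  vrs M = vrs P + vrs Q -> ell M = mulL (ell P) (ell Q).
Proof.
move=> ME vrsM; apply/fsfunP => x.
rewrite ellE ME vrsM (mulL_coefE l).
rewrite (mul_coef_fsubset _ _ _ (ell_Supp_sub P) (ell_Supp_sub Q)) /mul_coef.
case: ifP => top_x.
  rewrite big_seq [RHS]big_seq; apply: eq_bigr => p pP.
  rewrite big_seq [RHS]big_seq; apply: eq_bigr => q qQ.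
  by apply: eq_bigr => k _; rewrite ell_mul_coef_term ?top_x.
symmetry; rewrite big_seq big1 // => p pP; rewrite big_seq big1 // => q qQ.
by rewrite big1 // => k _; rewrite ell_mul_coef_term ?top_x.
Qed.

End LeadingForm.

Lemma ell_neq0 (K : fieldType) rho sigma l (P : lpoly K) :
  Supp P != fset0 -> Supp (ell rho sigma l P) != fset0.
Proof.
move=> P_neq0; have [_ [z zP wt_z]] := vrsP rho sigma l P_neq0.
by apply/fset0Pn; exists z; rewrite mem_Supp ellE wt_z eqxx -mem_Supp.
Qed.

Section Products.
Variables (K : fieldType) (l : nat) (mul : lpoly K -> lpoly K -> lpoly K).
Hypothesis l_gt0 : (0 < l)%N.
Hypothesis mulWL : mul = mulW l \/ mul = @mulL K.
Local Notation top u v R := (lexmax (lexform u v \o expo l) (Supp R) (0, 0%N)).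

Lemma mul_coefP : exists2 c, (forall p q, c p q 0 = 1 :> K) &
  forall P Q x, mul P Q x = mul_coef l c P Q x.
Proof.
case: mulWL => ->; last by exists (coefL K) => // P Q x; apply: mulL_coefE.
exists (coefW K l) => [p q|]; last exact: mulW_coefE.
by rewrite /coefW bin0 /ffact big_ord0 mulr1.
Qed.

Lemma vrs_lexform rho sigma v (R : lpoly K) : Supp R != fset0 ->
  vrs rho sigma l R =
  (lexform (rho%:~R, sigma%:~R) v (expo l (top (rho%:~R, sigma%:~R) v R))).1.
Proof.
move=> R_neq0; have [wt_le [z zR wt_z]] := vrsP rho sigma l R_neq0.
have [t_in t_max] := lexmaxP (lexform (rho%:~R, sigma%:~R) v \o expo l) (0, 0%N)
  (fset_enum_neq0 R_neq0).
apply/eqP; rewrite eq_le wt_le // andbT -wt_z.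
by have := t_max z zR; rewrite leEprodlexi => /andP[].
Qed.

Variables P Q : lpoly K.
Hypotheses (P_neq0 : Supp P != fset0) (Q_neq0 : Supp Q != fset0).

Lemma lexmax_lexform_mul u v : u.1 * v.2 != u.2 * v.1 ->
  (0 < (u.1 + u.2, v.1 + v.2) :> lex)%O ->
  padd (top u v P) (top u v Q) \in Supp (mul P Q) /\
  top u v (mul P Q) = padd (top u v P) (top u v Q).
Proof.
move=> det_neq0 form_gt0; have [c c_key0 mulE] := mul_coefP.
exact: (lexmax_mul (lexform_expo_inj l_gt0 det_neq0) (lexform_expo_padd l u v)
  (lexform_expo_key_lt l_gt0 form_gt0) c_key0 P_neq0 Q_neq0 (mulE P Q)).
Qed.

Lemma Supp_mul_neq0 : Supp (mul P Q) != fset0.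
Proof.
pose u : rat * rat := (1, 0); pose v : rat * rat := (0, 1).
have det_neq0 : u.1 * v.2 != u.2 * v.1 by [].
have form_gt0 : (0 < (u.1 + u.2, v.1 + v.2) :> lex)%O by [].
have [top_in _] := lexmax_lexform_mul det_neq0 form_gt0.
by apply/fset0Pn; eexists; apply: top_in.
Qed.

Lemma w_mul : w l (mul P Q) = padd (w l P) (w l Q).
Proof.
pose u : rat * rat := (1, -1); pose v : rat * rat := (1, 0).
have w_top (R : lpoly K) : w l R = top u v R.
  by apply: eq_lexmax => p; rewrite /lexform /= !mul1r mulN1r mul0r addr0.
have det_neq0 : u.1 * v.2 != u.2 * v.1 by [].
have form_gt0 : (0 < (u.1 + u.2, v.1 + v.2) :> lex)%O by [].
by rewrite !w_top; have [_ ->] := lexmax_lexform_mul det_neq0 form_gt0.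
Qed.

Lemma wbar_mul : wbar l (mul P Q) = padd (wbar l P) (wbar l Q).
Proof.
pose u : rat * rat := (-1, 1); pose v : rat * rat := (0, 1).
have wbar_top (R : lpoly K) : wbar l R = top u v R.
  by apply: eq_lexmax => p; rewrite /lexform /= !mul1r mulN1r mul0r add0r addrC.
have det_neq0 : u.1 * v.2 != u.2 * v.1 by [].
have form_gt0 : (0 < (u.1 + u.2, v.1 + v.2) :> lex)%O by [].
by rewrite !wbar_top; have [_ ->] := lexmax_lexform_mul det_neq0 form_gt0.
Qed.

Lemma vrs_mul rho sigma : inVbar rho sigma ->
  vrs rho sigma l (mul P Q) = vrs rho sigma l P + vrs rho sigma l Q.
Proof.
case/andP => gcd1 rs_ge0.
pose u : rat * rat := (rho%:~R, sigma%:~R).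
(* A tie-break form, chosen independent of the weight form [u]. *)
pose v : rat * rat := if sigma == 0 then (0, 1) else (1, 0).
have det_neq0 : u.1 * v.2 != u.2 * v.1.
  rewrite /u /v; have [s0|s_neq0] /= := eqVneq sigma 0.
    by rewrite mulr1 mulr0 intr_eq0; apply: contraTneq gcd1 => r0; rewrite r0 s0.
  by rewrite mulr0 mulr1 eq_sym intr_eq0.
have form_gt0 : (0 < (u.1 + u.2, v.1 + v.2) :> lex)%O.
  rewrite ltxi_pair /= -intrD ler0z rs_ge0 /v.
  by case: eqP => _ /=; rewrite ?addr0 ?add0r ltr01 implybT.
rewrite !(vrs_lexform _ _ v) ?Supp_mul_neq0 //.
by have [_ ->] := lexmax_lexform_mul det_neq0 form_gt0; rewrite lexform_expo_padd.
Qed.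

Lemma ell_mul rho sigma : inV rho sigma ->
  ell rho sigma l (mul P Q) = mulL (ell rho sigma l P) (ell rho sigma l Q).
Proof.
case/andP => gcd1 rs_gt0; have [c c_key0 mulE] := mul_coefP.
apply: (ell_mul_coef l_gt0 rs_gt0 c_key0 P_neq0 Q_neq0 (mulE P Q)).
by apply: vrs_mul; rewrite /inVbar gcd1 ltW.
Qed.

End Products.

Section LeadingPoints.
Variables (K : fieldType) (l : nat) (mul : lpoly K -> lpoly K -> lpoly K).
Hypothesis l_gt0 : (0 < l)%N.
Hypothesis mulWL : mul = mulW l \/ mul = @mulL K.
Variables P Q : lpoly K.
Hypotheses (P_neq0 : Supp P != fset0) (Q_neq0 : Supp Q != fset0).
Variables rho sigma : int.
Hypothesis rs_inV : inV rho sigma.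

Lemma st_mul : st rho sigma l (mul P Q) = padd (st rho sigma l P) (st rho sigma l Q).
Proof. by rewrite /st ell_mul // (w_mul l_gt0 (or_intror erefl)) ?ell_neq0. Qed.

Lemma en_mul : en rho sigma l (mul P Q) = padd (en rho sigma l P) (en rho sigma l Q).
Proof. by rewrite /en ell_mul // (wbar_mul l_gt0 (or_intror erefl)) ?ell_neq0. Qed.

End LeadingPoints.

Theorem proposition1p8 (K : fieldType) (hK : [pchar K] =i pred0)
    (l : nat) (hl : (0 < l)%N) :
  forall mul : lpoly K -> lpoly K -> lpoly K,
    (mul = mulW l \/ mul = @mulL K) ->
  forall P Q : lpoly K, Supp P != fset0 -> Supp Q != fset0 ->
    ((w l (mul P Q) = padd (w l P) (w l Q)
        /\ wbar l (mul P Q) = padd (wbar l P) (wbar l Q))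
     /\ Supp (mul P Q) != fset0)
    /\ (forall rho sigma : int, inV rho sigma ->
          ell rho sigma l (mul P Q) = mulL (ell rho sigma l P) (ell rho sigma l Q))
    /\ (forall rho sigma : int, inVbar rho sigma ->
          vrs rho sigma l (mul P Q) = (vrs rho sigma l P + vrs rho sigma l Q)%R)
    /\ (forall rho sigma : int, inV rho sigma ->
          st rho sigma l (mul P Q) = padd (st rho sigma l P) (st rho sigma l Q))
    /\ (forall rho sigma : int, inV rho sigma ->
          en rho sigma l (mul P Q) = padd (en rho sigma l P) (en rho sigma l Q)).
Proof.
move=> mul mulWL P Q P_neq0 Q_neq0.
have w_PQ := w_mul hl mulWL P_neq0 Q_neq0.
have wbar_PQ := wbar_mul hl mulWL P_neq0 Q_neq0.
have PQ_neq0 := Supp_mul_neq0 hl mulWL P_neq0 Q_neq0.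
split=> //; split=> [rho sigma|]; first exact: ell_mul.
split=> [rho sigma|]; first exact: vrs_mul.
by split=> rho sigma; [exact: st_mul | exact: en_mul].
Qed.
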